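(* Fix a constant $c>0$. The class $\mathcal{A}_c$ of bucket-based sorting algorithms, viewed as functions on arrays $x\in\mathbb{R}^n$ via $x\mapsto\mathrm{cost}(A,x)$ (the number of comparisons used by $A$ on $x$), has pseudo-dimension $O(n^{1+c})$.
   Context: A bucket-based sorting algorithm in $\mathcal{A}_c$ (for sorting $n$ reals $a_1,\dots,a_n$ in the comparison model) is specified by: (i) $n$ bucket boundaries $b_1<b_2<\dots<b_n$; (ii) for each $i=1,\dots,n$, a search tree $T_i$ described by $O(n^c)$ bits used to place element $a_i$ into its correct bucket (a search not resolved by $T_i$ is completed by standard binary search over the buckets). The algorithm distributes each element into its bucket this way, sorts each bucket with InsertionSort, and concatenates. Pseudo-dimension: a finite set $\{x_1,\dots,x_m\}$ is shattered by a class $\mathcal{H}$ of real functions if there exist reals $r_i$ such that for every $T\subseteq\{1,\dots,m\}$ some $h\in\mathcal{H}$ has $h(x_i)>r_i\iff i\in T$; the pseudo-dimension is the largest size of a shattered set. *)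

From Stdlib Require Import Reals List Arith.
Import ListNotations.
Open Scope R_scope.

Definition shatters_on {D : Type} (Dom : D -> Prop) (H : (D -> R) -> Prop)
    (m : nat) (pts : nat -> D) : Prop :=
  (forall i, (i < m)%nat -> Dom (pts i)) /\
  (forall i j, (i < m)%nat -> (j < m)%nat -> pts i = pts j -> i = j) /\
  exists r : nat -> R,
    forall T : nat -> Prop,
      exists h, H h /\ forall i, (i < m)%nat -> (h (pts i) > r i <-> T i).

(* The boundaries are b 1 < ... < b n (b : nat -> R, only the
   indices 1..n matter).  The buckets are indexed 0..n: bucket j is
   {x | b_j < x <= b_(j+1)} with b_0 = -oo, b_(n+1) = +oo, i.e. the bucket of
   x is the number of boundaries strictly below x.  Every comparison of two
   reals counts as one comparison. *)

(* A search tree: each internal node compares the element x with boundary b k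
   (going left if x <= b k, right otherwise). *)
Inductive stree : Type :=
  | SLeaf : stree
  | SNode : nat -> stree -> stree -> stree.

Fixpoint stree_ok (n : nat) (t : stree) : Prop :=
  match t with
  | SLeaf => True
  | SNode k l r => (1 <= k <= n)%nat /\ stree_ok n l /\ stree_ok n r
  end.

(* Run the tree on x, maintaining the range [lo, hi] of buckets consistent with
   the comparisons made so far; returns (lo, hi, #comparisons). *)
Fixpoint tree_search (b : nat -> R) (x : R) (t : stree) (lo hi : nat)
    : nat * nat * nat :=
  match t with
  | SLeaf => (lo, hi, 0%nat)
  | SNode k l r =>
      if Rle_dec x (b k) then
        let '(lo', hi', c) := tree_search b x l lo (Nat.min hi (k - 1)) in
        (lo', hi', S c)
      else
        let '(lo', hi', c) := tree_search b x r (Nat.max lo k) hi in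
        (lo', hi', S c)
  end.

(* Standard binary search over the bucket range [lo, hi]; returns
   (bucket, #comparisons).  fuel is only a termination device. *)
Fixpoint bsearch (fuel : nat) (b : nat -> R) (x : R) (lo hi : nat) : nat * nat :=
  match fuel with
  | O => (lo, 0%nat)
  | S f =>
      if (lo <? hi)%nat then
        let mid := ((lo + hi + 1) / 2)%nat in
        if Rle_dec x (b mid) then
          let '(j, c) := bsearch f b x lo (mid - 1) in (j, S c)
        else
          let '(j, c) := bsearch f b x mid hi in (j, S c)
      else (lo, 0%nat)
  end.

Definition place (n : nat) (b : nat -> R) (t : stree) (x : R) : nat * nat :=
  let '(lo, hi, c1) := tree_search b x t 0 n in
  let '(j, c2) := bsearch (S n) b x lo hi in
  (j, (c1 + c2)%nat).

(* The sorted prefix is kept in decreasing order (head = last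
   element of the sorted prefix); a new key is compared with the elements of
   the prefix from the right, stopping at the first one <= key. *)
Fixpoint ins (x : R) (l : list R) : nat * list R :=
  match l with
  | [] => (0%nat, [x])
  | y :: l' =>
      if Rle_dec y x then (1%nat, x :: l)
      else let '(c, l'') := ins x l' in (S c, y :: l'')
  end.

Fixpoint isort_aux (acc : list R) (l : list R) : nat :=
  match l with
  | [] => 0%nat
  | x :: l' => let '(c, acc') := ins x acc in (c + isort_aux acc' l')%nat
  end.

Definition isort_cost (l : list R) : nat := isort_aux [] l.

(* An algorithm: boundaries and, for each i = 1..n, the bit string describing
   the search tree T_i (the i-th entry of ba_codes, counted from 0). *)
Record bucket_alg : Type := mkBucketAlg {
  ba_bound : nat -> R;
  ba_codes : list (list bool)
}.

(* Elements are distributed in the order a_1, ..., a_n, each bucket is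
   then sorted by InsertionSort (its elements in order of arrival), and the
   buckets are concatenated (no comparisons). *)
Definition cost (dec : nat -> list bool -> stree) (n : nat)
    (A : bucket_alg) (x : list R) : nat :=
  let b := ba_bound A in
  let pl := fun i => place n b (dec n (nth i (ba_codes A) [])) (nth i x 0) in
  let dist_cost := fold_right Nat.add 0%nat (map (fun i => snd (pl i)) (seq 0 n)) in
  let bucket j := map (fun i => nth i x 0)
                      (filter (fun i => Nat.eqb (fst (pl i)) j) (seq 0 n)) in
  let sort_cost := fold_right Nat.add 0%nat
                      (map (fun j => isort_cost (bucket j)) (seq 0 (S n))) in
  (dist_cost + sort_cost)%nat.

(* Membership in the class A_c for arrays of size n, where "described by
   O(n^c) bits" is made explicit as: at most C * n^c bits in the fixed
   description scheme dec. *)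
Definition in_Ac (c C : R) (dec : nat -> list bool -> stree) (n : nat)
    (A : bucket_alg) : Prop :=
  (forall k, (1 <= k)%nat -> (k < n)%nat -> ba_bound A k < ba_bound A (S k)) /\
  length (ba_codes A) = n /\
  (forall i, (i < n)%nat ->
     INR (length (nth i (ba_codes A) [])) <= C * Rpower (INR n) c /\
     stree_ok n (dec n (nth i (ba_codes A) []))).

Definition cost_class (c C : R) (dec : nat -> list bool -> stree) (n : nat)
    (h : list R -> R) : Prop :=
  exists A, in_Ac c C dec n A /\ forall x, h x = INR (cost dec n A x).

(* The cost of an algorithm of A_c on arrays drawn from a finite sample of reals
   depends only on its bit strings and on the rank of each boundary b_k within the
   sample: a comparison x <= b_k with x in the sample has the same outcome for all
   boundaries of equal rank.  For m shattered arrays of length n the sample has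
   mn + 1 elements, so there are at most 2^((L+1)n) (mn+2)^(n+1) behaviours, with
   L ~ C n^c bounding the description length, while shattering needs 2^m of them.
   Taking logarithms and using ln n <= n^c / c yields m = O(n^(1+c)). *)

From Stdlib Require Import Reals List Arith Lia Lra ZArith.
From Stdlib Require Import IndefiniteDescription.
Import ListNotations.
Open Scope R_scope.

Lemma ln_le x y : 0 < x -> x <= y -> ln x <= ln y.
Proof. intros hx [hxy|<-]; [left; apply ln_increasing|]; lra. Qed.

Lemma ln_le_sub_1 y : 0 < y -> ln y <= y - 1.
Proof. intros hy. pose proof (exp_ineq1_le (ln y)) as h. rewrite exp_ln in h; lra. Qed.

Lemma ln_nonneg x : 1 <= x -> 0 <= ln x.
Proof. intros hx. rewrite <- ln_1. apply ln_le; lra. Qed.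

Lemma ln_le_tangent a y : 0 < a -> 0 < y -> ln y <= ln a + y / a - 1.
Proof.
  intros ha hy. pose proof (ln_le_sub_1 (y / a) (Rdiv_lt_0_compat _ _ hy ha)) as h.
  unfold Rdiv in h. rewrite ln_mult, ln_Rinv in h by (try apply Rinv_0_lt_compat; lra).
  unfold Rdiv; lra.
Qed.

Lemma ln_le_Rpower_div c x : 0 < c -> 1 <= x -> ln x <= Rpower x c / c.
Proof.
  intros hc hx. apply Rmult_le_reg_l with c; [lra|].
  replace (c * (Rpower x c / c)) with (Rpower x c) by (field; lra).
  pose proof (ln_le_sub_1 (Rpower x c) (exp_pos _)) as h.
  rewrite ln_Rpower in h; lra.
Qed.

Lemma le_of_pow2_le (n m a : nat) : (1 <= n)%nat ->
  (2 ^ m <= 2 ^ a * (m * n + 2) ^ (n + 1))%nat ->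
  INR m <= 4 * (INR a * ln 2 + 2 * INR n * ln 24 + 4 * INR n * ln (INR n)).
Proof.
  intros hn H.
  assert (hN : 1 <= INR n) by (apply (le_INR 1); lia).
  assert (l2 := ln_lt_2).
  assert (l24 : 0 <= ln 24) by (apply ln_nonneg; lra).
  assert (lN : 0 <= ln (INR n)) by (apply ln_nonneg; lra).
  assert (hA := pos_INR a).
  destruct (Nat.eq_0_gt_0_cases m) as [->|hm]; [simpl; nra|].
  assert (hM : 1 <= INR m) by (apply (le_INR 1); lia).
  apply le_INR in H. rewrite mult_INR, !pow_INR, plus_INR, mult_INR in H.
  replace (INR 2) with 2 in H by reflexivity.
  assert (Hln : INR m * ln 2 <= INR a * ln 2 + INR (n + 1) * ln (INR m * INR n + 2)).
  { rewrite <- !ln_pow, <- ln_mult by (try apply pow_lt; nra). apply ln_le; [apply pow_lt; lra | exact H]. }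
  rewrite plus_INR in Hln. change (INR 1) with 1 in Hln.
  (* The tangent of ln at 24 n^2 trades ln m for m / (8n); summed over n + 1 factors this
     is at most m / 4, which m ln 2 absorbs because ln 2 > 1/2. *)
  assert (Hlog : ln (INR m * INR n + 2) <= ln 24 + 2 * ln (INR n) + INR m / (8 * INR n)).
  { eapply Rle_trans; [apply ln_le with (y := 3 * INR m * INR n); nra|].
    eapply Rle_trans; [apply ln_le_tangent with (a := 24 * INR n ^ 2); nra|].
    replace (3 * INR m * INR n / (24 * INR n ^ 2)) with (INR m / (8 * INR n)) by (field; lra).
    rewrite ln_mult, ln_pow by nra. change (INR 2) with 2. lra. }
  assert (Hpos : 0 <= INR m / (8 * INR n)) by (apply Rle_mult_inv_pos; lra).
  assert (Hsum : (INR n + 1) * ln (INR m * INR n + 2) <=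
                 2 * INR n * ln 24 + 4 * INR n * ln (INR n) + INR m / 4).
  { apply Rle_trans with (2 * INR n * (ln 24 + 2 * ln (INR n) + INR m / (8 * INR n))).
    - apply Rle_trans with ((INR n + 1) * (ln 24 + 2 * ln (INR n) + INR m / (8 * INR n))).
      + apply Rmult_le_compat_l; lra.
      + apply Rmult_le_compat_r; lra.
    - apply Req_le. field. lra. }
  assert (INR m / 2 <= INR m * ln 2) by nra.
  lra.
Qed.

Definition pdim_const (c C : R) : R := 4 * ((C + 2) * ln 2 + 2 * ln 24 + 4 / c).

Lemma pdim_bound_of_pow2_le c C (n m L : nat) : 0 < c -> 0 < C -> (1 <= n)%nat ->
  INR L <= C * Rpower (INR n) c + 1 ->
  (2 ^ m <= 2 ^ ((L + 1) * n) * (m * n + 2) ^ (n + 1))%nat ->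
  INR m <= pdim_const c C * Rpower (INR n) (1 + c).
Proof.
  intros hc hC hn HL H.
  assert (hN : 1 <= INR n) by (apply (le_INR 1); lia).
  set (P := Rpower (INR n) c) in *.
  assert (hP : 1 <= P).
  { unfold P, Rpower. pose proof (exp_ineq1_le (c * ln (INR n))).
    pose proof (ln_nonneg _ hN). nra. }
  assert (hlnN : INR n * ln (INR n) <= INR n * P * / c).
  { replace (INR n * P * / c) with (INR n * (P / c)) by (field; lra).
    apply Rmult_le_compat_l; [lra|]. apply ln_le_Rpower_div; lra. }
  assert (hL : (INR L + 1) * INR n <= (C + 2) * (INR n * P)) by nra.
  pose proof (le_of_pow2_le n m _ hn H) as Hm.
  rewrite mult_INR, plus_INR in Hm. change (INR 1) with 1 in Hm.
  rewrite Rpower_plus, Rpower_1 by lra. fold P. unfold pdim_const, Rdiv.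
  assert (l2 := ln_lt_2). assert (l24 : 0 <= ln 24) by (apply ln_nonneg; lra).
  assert (INR n <= INR n * P) by nra.
  nra.
Qed.

Definition same_side (n : nat) (b b' : nat -> R) (x : R) : Prop :=
  forall k, (k <= n)%nat -> (x <= b k <-> x <= b' k).

Lemma tree_search_same_side n b b' x t : stree_ok n t -> same_side n b b' x ->
  forall lo hi, tree_search b x t lo hi = tree_search b' x t lo hi.
Proof.
  intros Hok Hs. induction t as [|k l IHl r IHr]; intros lo hi; [reflexivity|].
  destruct Hok as [Hk [Hl Hr]]. specialize (Hs k ltac:(lia)). cbn [tree_search].
  destruct (Rle_dec x (b k)), (Rle_dec x (b' k)); try tauto.
  - rewrite IHl; auto.
  - rewrite IHr; auto.
Qed.

Lemma tree_search_hi_le b x t : forall lo hi lo' hi' c,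
  tree_search b x t lo hi = (lo', hi', c) -> (hi' <= hi)%nat.
Proof.
  induction t as [|k l IHl r IHr]; intros lo hi lo' hi' c E; cbn [tree_search] in E.
  - injection E; lia.
  - destruct (Rle_dec x (b k)).
    + destruct (tree_search b x l lo (Nat.min hi (k - 1))) as [[lo1 hi1] c1] eqn:E1.
      injection E as <- <- <-. apply IHl in E1. lia.
    + destruct (tree_search b x r (Nat.max lo k) hi) as [[lo1 hi1] c1] eqn:E1.
      injection E as <- <- <-. apply IHr in E1. lia.
Qed.

Lemma bsearch_same_side n b b' x : same_side n b b' x ->
  forall fuel lo hi, (hi <= n)%nat -> bsearch fuel b x lo hi = bsearch fuel b' x lo hi.
Proof.
  intros Hs fuel. induction fuel as [|f IH]; intros lo hi Hhi; [reflexivity|].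
  cbn [bsearch]. destruct (lo <? hi)%nat eqn:Elt; [|reflexivity].
  apply Nat.ltb_lt in Elt.
  assert (Hmid : ((lo + hi + 1) / 2 <= hi)%nat) by (apply Nat.Div0.div_le_upper_bound; lia).
  set (mid := ((lo + hi + 1) / 2)%nat) in *.
  specialize (Hs mid (Nat.le_trans _ _ _ Hmid Hhi)).
  destruct (Rle_dec x (b mid)), (Rle_dec x (b' mid)); try tauto;
    rewrite IH by lia; reflexivity.
Qed.

Lemma place_same_side n b b' t x : stree_ok n t -> same_side n b b' x ->
  place n b t x = place n b' t x.
Proof.
  intros Hok Hs. unfold place. rewrite (tree_search_same_side n b b' x t Hok Hs).
  destruct (tree_search b' x t 0 n) as [[lo hi] c] eqn:E.
  apply tree_search_hi_le in E. rewrite (bsearch_same_side n b b' x Hs); auto.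
Qed.

Definition cost_of_placement (n : nat) (x : list R) (pl : nat -> nat * nat) : nat :=
  let dist_cost := fold_right Nat.add 0%nat (map (fun i => snd (pl i)) (seq 0 n)) in
  let bucket j := map (fun i => nth i x 0)
                      (filter (fun i => Nat.eqb (fst (pl i)) j) (seq 0 n)) in
  let sort_cost := fold_right Nat.add 0%nat
                      (map (fun j => isort_cost (bucket j)) (seq 0 (S n))) in
  (dist_cost + sort_cost)%nat.

Lemma cost_of_placement_ext n x pl pl' : (forall i, (i < n)%nat -> pl i = pl' i) ->
  cost_of_placement n x pl = cost_of_placement n x pl'.
Proof.
  intros H. unfold cost_of_placement.
  rewrite (map_ext_in (fun i => snd (pl i)) (fun i => snd (pl' i)))
    by (intros i Hi; apply in_seq in Hi; rewrite H by lia; reflexivity).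
  do 2 f_equal. apply map_ext. intros j. do 2 f_equal.
  apply filter_ext_in. intros i Hi. apply in_seq in Hi. rewrite H by lia. reflexivity.
Qed.

Lemma cost_same_side dec n A A' x :
  ba_codes A = ba_codes A' ->
  (forall i, (i < n)%nat -> stree_ok n (dec n (nth i (ba_codes A) []))) ->
  (forall i, (i < n)%nat -> same_side n (ba_bound A) (ba_bound A') (nth i x 0)) ->
  cost dec n A x = cost dec n A' x.
Proof.
  intros Hc Hok Hs.
  change (cost dec n A x) with (cost_of_placement n x
    (fun i => place n (ba_bound A) (dec n (nth i (ba_codes A) [])) (nth i x 0))).
  change (cost dec n A' x) with (cost_of_placement n x
    (fun i => place n (ba_bound A') (dec n (nth i (ba_codes A') [])) (nth i x 0))).
  rewrite <- Hc. apply cost_of_placement_ext. intros i Hi. apply place_same_side; auto.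
Qed.

Definition rank (vals : list R) (y : R) : nat :=
  length (filter (fun s => if Rle_dec s y then true else false) vals).

Lemma rank_le_length vals y : (rank vals y <= length vals)%nat.
Proof. apply filter_length_le. Qed.

Lemma rank_le_mono vals y y' : y <= y' -> (rank vals y <= rank vals y')%nat.
Proof.
  intros Hy. induction vals as [|a vals IH]; [reflexivity|]. unfold rank in *; cbn.
  destruct (Rle_dec a y), (Rle_dec a y'); cbn; lra || lia.
Qed.

Lemma rank_lt vals y y' s : In s vals -> y < s -> s <= y' ->
  (rank vals y < rank vals y')%nat.
Proof.
  intros Hs Hy Hy'. assert (Hyy : y <= y') by lra.
  induction vals as [|a vals IH]; [destruct Hs|].
  pose proof (rank_le_mono vals y y' Hyy) as Hm. unfold rank in *; cbn.
  destruct Hs as [->|Hs].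
  - destruct (Rle_dec s y), (Rle_dec s y'); cbn; lra || lia.
  - specialize (IH Hs). destruct (Rle_dec a y), (Rle_dec a y'); cbn; lra || lia.
Qed.

Lemma rank_eq_same_side vals y y' s : rank vals y = rank vals y' -> In s vals ->
  (s <= y <-> s <= y').
Proof.
  intros Hr Hs. destruct (Rle_dec s y), (Rle_dec s y'); try tauto.
  - pose proof (rank_lt vals y' y s Hs ltac:(lra) ltac:(lra)). lia.
  - pose proof (rank_lt vals y y' s Hs ltac:(lra) ltac:(lra)). lia.
Qed.

Fixpoint bitstrings_upto (L : nat) : list (list bool) :=
  match L with
  | O => [[]]
  | S L => [] :: map (cons true) (bitstrings_upto L) ++ map (cons false) (bitstrings_upto L)
  end.

Lemma In_bitstrings_upto L : forall l, (length l <= L)%nat -> In l (bitstrings_upto L).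
Proof.
  induction L as [|L IH]; intros [|a l] Hl; cbn in *; auto; try lia.
  right. apply in_or_app. destruct a; [left|right]; apply in_map, IH; lia.
Qed.

Lemma length_bitstrings_upto L : (length (bitstrings_upto L) < 2 ^ (L + 1))%nat.
Proof.
  induction L as [|L IH]; cbn [bitstrings_upto length]; [cbn; lia|].
  rewrite length_app, !length_map, Nat.add_succ_l, Nat.pow_succ_r'. lia.
Qed.

Fixpoint tuples {A : Type} (n : nat) (X : list A) : list (list A) :=
  match n with
  | O => [[]]
  | S n => flat_map (fun x => map (cons x) (tuples n X)) X
  end.

Lemma length_tuples {A} n (X : list A) : length (tuples n X) = (length X ^ n)%nat.
Proof.
  induction n as [|n IH]; [reflexivity|]. cbn [tuples].
  rewrite (flat_map_constant_length (c := length (tuples n X))) by (intros; apply length_map).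
  rewrite IH. cbn. lia.
Qed.

Lemma In_tuples {A} n (X : list A) : forall l, length l = n ->
  (forall a, In a l -> In a X) -> In l (tuples n X).
Proof.
  induction n as [|n IH]; intros [|a l] Hl HX; cbn in *; auto; try lia.
  apply in_flat_map. exists a. split; auto. apply in_map, IH; auto.
Qed.

Lemma length_In_tuples {A} n (X : list A) : forall l, In l (tuples n X) -> length l = n.
Proof.
  induction n as [|n IH]; intros l Hl; cbn in Hl.
  - destruct Hl as [<-|[]]; reflexivity.
  - apply in_flat_map in Hl as [x [_ Hx]]. apply in_map_iff in Hx as [l' [<- Hl']].
    cbn. f_equal. auto.
Qed.

Lemma NoDup_flat_map_cons {A} (T : list (list A)) (Y : list A) : NoDup T -> NoDup Y ->
  NoDup (flat_map (fun x => map (cons x) T) Y).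
Proof.
  intros HT HY. induction HY as [|x Y Hx HY IHY]; cbn; [constructor|].
  apply NoDup_app; auto.
  - apply NoDup_map_NoDup_ForallPairs; auto. intros a b _ _ E; injection E; auto.
  - intros a Ha Hb. apply in_map_iff in Ha as [t [<- _]].
    apply in_flat_map in Hb as [y [Hy Hb]]. apply in_map_iff in Hb as [t' [E _]].
    injection E as -> _. auto.
Qed.

Lemma NoDup_tuples {A} n (X : list A) : NoDup X -> NoDup (tuples n X).
Proof.
  intros HX. induction n as [|n IH]; cbn [tuples].
  - repeat constructor; auto.
  - apply NoDup_flat_map_cons; auto.
Qed.

Lemma NoDup_length_le_inj {A B} (V : list A) (W : list B) (f : A -> B) : NoDup V ->
  (forall v w, In v V -> In w V -> f v = f w -> v = w) ->
  (forall v, In v V -> In (f v) W) -> (length V <= length W)%nat.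
Proof.
  intros HV Hinj Hin. rewrite <- (length_map f V). apply NoDup_incl_length.
  - apply NoDup_map_NoDup_ForallPairs; [intros v w Hv Hw; apply Hinj; auto | exact HV].
  - intros b Hb. apply in_map_iff in Hb as [a [<- Ha]]. auto.
Qed.

Lemma shattered_pow2_le {D I B : Type} (P : I -> Prop) (F : I -> D -> R)
    (m : nat) (pts : nat -> D) (r : nat -> R) (sig : I -> B) (W : list B) :
  (forall T : nat -> Prop, exists a, P a /\ forall i, (i < m)%nat -> (F a (pts i) > r i <-> T i)) ->
  (forall a, P a -> In (sig a) W) ->
  (forall a a', P a -> P a' -> sig a = sig a' ->
     forall i, (i < m)%nat -> F a (pts i) = F a' (pts i)) ->
  (2 ^ m <= length W)%nat.
Proof.
  intros Hshat Hsig Hdet.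
  destruct (functional_choice (fun (v : list bool) a => P a /\
      forall i, (i < m)%nat -> (F a (pts i) > r i <-> nth i v false = true)))
    as [realize Hreal]; [intros v; apply Hshat|].
  replace (2 ^ m)%nat with (length (tuples m [true; false])) by (apply length_tuples).
  apply (NoDup_length_le_inj _ _ (fun v => sig (realize v))).
  - apply NoDup_tuples. repeat constructor; cbn; intuition discriminate.
  - intros v w Hv Hw E. apply length_In_tuples in Hv, Hw.
    destruct (Hreal v) as [Pv Hv'], (Hreal w) as [Pw Hw'].
    apply nth_ext with false false; [congruence|]. intros i Hi.
    specialize (Hdet _ _ Pv Pw E i ltac:(lia)).
    specialize (Hv' i ltac:(lia)). specialize (Hw' i ltac:(lia)). rewrite Hdet in Hv'.
    destruct (nth i v false), (nth i w false);
      [reflexivity | symmetry; apply Hw', Hv'; reflexivity | apply Hv', Hw'; reflexivity | reflexivity].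
  - intros v _. apply Hsig, Hreal.
Qed.

Definition signature (vals : list R) (n : nat) (A : bucket_alg) : list (list bool) * list nat :=
  (ba_codes A, map (fun k => rank vals (ba_bound A k)) (seq 0 (S n))).

Definition signatures (vals : list R) (n L : nat) : list (list (list bool) * list nat) :=
  list_prod (tuples n (bitstrings_upto L)) (tuples (S n) (seq 0 (S (length vals)))).

Lemma length_signatures vals n L :
  (length (signatures vals n L) <= 2 ^ ((L + 1) * n) * (length vals + 1) ^ (n + 1))%nat.
Proof.
  unfold signatures. rewrite length_prod, !length_tuples, length_seq, Nat.pow_mul_r.
  pose proof (length_bitstrings_upto L).
  apply Nat.mul_le_mono.
  - apply Nat.pow_le_mono_l. lia.
  - rewrite !Nat.add_1_r. reflexivity.
Qed.

Lemma In_signatures c C dec n L vals A : in_Ac c C dec n A ->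
  C * Rpower (INR n) c <= INR L -> In (signature vals n A) (signatures vals n L).
Proof.
  intros [_ [Hlen Hcodes]] HL. apply in_prod.
  - apply In_tuples; auto. intros code Hcode. apply (In_nth _ _ []) in Hcode as [i [Hi <-]].
    apply In_bitstrings_upto, INR_le. rewrite Hlen in Hi.
    destruct (Hcodes i Hi) as [Hbits _]. lra.
  - apply In_tuples; [rewrite length_map, length_seq; reflexivity|].
    intros k Hk. apply in_map_iff in Hk as [j [<- _]].
    apply in_seq. pose proof (rank_le_length vals (ba_bound A j)). lia.
Qed.

(* The sample [vals] contains 0 because [cost] reads absent entries of x as [nth i x 0 = 0]. *)
Lemma cost_eq_of_signature_eq c C dec n vals A A' x : in_Ac c C dec n A ->
  In 0 vals -> incl x vals -> signature vals n A = signature vals n A' ->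
  cost dec n A x = cost dec n A' x.
Proof.
  intros [_ [_ Hcodes]] H0 Hx Hsig.
  pose proof (f_equal fst Hsig) as Hc. pose proof (f_equal snd Hsig) as Hr. cbn [fst snd] in Hc, Hr.
  apply cost_same_side; [exact Hc | intros i Hi; apply Hcodes, Hi |].
  intros i _ k Hk. apply (rank_eq_same_side vals).
  - apply (ext_in_map Hr). apply in_seq. lia.
  - destruct (nth_in_or_default i x 0) as [Hin|Hdef]; [apply Hx, Hin | rewrite Hdef; exact H0].
Qed.

Lemma nat_between (x : R) : 0 <= x -> exists L : nat, x <= INR L <= x + 1.
Proof.
  intros hx. destruct (archimed x) as [h1 h2].
  exists (Z.to_nat (up x)). rewrite INR_IZR_INZ, Z2Nat.id by (apply le_IZR; lra). lra.
Qed.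

Theorem mainTheorem4 :
  forall (c : R), 0 < c ->
  forall (C : R), 0 < C ->
  forall (dec : nat -> list bool -> stree),
  exists K : R, exists N0 : nat,
    forall n : nat, (N0 <= n)%nat ->
    forall (m : nat) (pts : nat -> list R),
      shatters_on (fun x : list R => length x = n) (cost_class c C dec n) m pts ->
      INR m <= K * Rpower (INR n) (1 + c).
Proof.
  intros c hc C hC dec. exists (pdim_const c C), 1%nat.
  intros n hn m pts [Hdom [_ [r Hshat]]].
  assert (HP : 0 <= C * Rpower (INR n) c) by (apply Rmult_le_pos; [lra | left; apply exp_pos]).
  destruct (nat_between _ HP) as [L [HL1 HL2]].
  set (vals := 0 :: flat_map pts (seq 0 m)).
  assert (Hvals : length vals = S (m * n)).
  { cbn. rewrite (flat_map_constant_length (c := n)), length_seq; [lia|].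
    intros i Hi. apply in_seq in Hi. apply Hdom. lia. }
  assert (Hpow : (2 ^ m <= length (signatures vals n L))%nat).
  { apply (shattered_pow2_le (in_Ac c C dec n) (fun A x => INR (cost dec n A x))
             m pts r (signature vals n)).
    - intros T. destruct (Hshat T) as [h [[A [HA Hh]] HT]].
      exists A. split; [exact HA|]. intros i Hi. rewrite <- Hh. auto.
    - intros A HA. apply (In_signatures c C dec); auto.
    - intros A A' HA _ Hsig i Hi. f_equal. apply (cost_eq_of_signature_eq c C dec n vals); auto.
      + left; reflexivity.
      + intros y Hy. right. apply in_flat_map. exists i. split; [apply in_seq; lia|exact Hy]. }
  apply (pdim_bound_of_pow2_le c C n m L); auto.
  eapply Nat.le_trans; [exact Hpow|]. replace (m * n + 2)%nat with (length vals + 1)%nat by lia.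
  apply length_signatures.
Qed.
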